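(* Let $A\in\mathbb Z^{d\times n}$ with $\ker(A)\cap\mathbb N^n=\{0\}$. Then $S(A)\subseteq D(A)\subseteq D^w(A)\subseteq G(A)$.
   Context: For $z\in\mathbb Z^n$, $z^\pm\in\mathbb N^n$ are the unique vectors with disjoint supports and $z=z^+-z^-$; $\|\cdot\|$ is the $1$-norm; $\le$ is coordinatewise. For $z\in\ker(A)$ and $u,v\in\ker(A)\setminus\{0\}$ with $z=u+v$: it is a proper conformal decomposition if $z^+=u^++v^+$ and $z^-=u^-+v^-$; a proper semi-conformal decomposition if for every $i$, $u_i>0$ implies $v_i\ge0$; a positive (resp. negative) distance decomposition if $u^+\le z^+$ (resp. $u^-\le z^-$) and $\|v\|<\|z\|$. $S(A)$ is the set of nonzero $z\in\ker(A)$ with no proper semi-conformal decomposition; $G(A)$ the set of nonzero $z\in\ker(A)$ with no proper conformal decomposition; $D^+(A)$ (resp. $D^-(A)$) the set of nonzero $z\in\ker(A)$ with no positive (resp. negative) distance decomposition; $D(A)=D^+(A)\cap D^-(A)$ and $D^w(A)=D^+(A)\cup D^-(A)$. *)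

From mathcomp Require Import all_boot all_order all_algebra.
Set Implicit Arguments. Unset Strict Implicit. Unset Printing Implicit Defensive.
Import Order.TTheory GRing.Theory Num.Theory.
Local Open Scope ring_scope.

Definition vpos n (z : 'cV[int]_n) : 'cV[int]_n := \col_i Num.max (z i 0) 0.
Definition vneg n (z : 'cV[int]_n) : 'cV[int]_n := \col_i Num.max (- z i 0) 0.

Definition norm1 n (z : 'cV[int]_n) : int := \sum_i `|z i 0|.

Definition vle n (u v : 'cV[int]_n) : Prop := forall i, u i 0 <= v i 0.

Definition inker d n (A : 'M[int]_(d, n)) (z : 'cV[int]_n) : Prop := A *m z = 0.

Definition kdecomp d n (A : 'M[int]_(d, n)) (z u v : 'cV[int]_n) : Prop :=
  [/\ inker A u, inker A v, u != 0, v != 0 & z = u + v].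

Definition proper_conformal d n (A : 'M[int]_(d, n)) (z u v : 'cV[int]_n) :=
  kdecomp A z u v /\ vpos z = vpos u + vpos v /\ vneg z = vneg u + vneg v.

Definition proper_semiconformal d n (A : 'M[int]_(d, n)) (z u v : 'cV[int]_n) :=
  kdecomp A z u v /\ (forall i, 0 < u i 0 -> 0 <= v i 0).

Definition pos_distance d n (A : 'M[int]_(d, n)) (z u v : 'cV[int]_n) :=
  kdecomp A z u v /\ vle (vpos u) (vpos z) /\ norm1 v < norm1 z.

Definition neg_distance d n (A : 'M[int]_(d, n)) (z u v : 'cV[int]_n) :=
  kdecomp A z u v /\ vle (vneg u) (vneg z) /\ norm1 v < norm1 z.

Definition inS d n (A : 'M[int]_(d, n)) (z : 'cV[int]_n) : Prop :=
  [/\ z != 0, inker A z & forall u v, ~ proper_semiconformal A z u v].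
Definition inG d n (A : 'M[int]_(d, n)) (z : 'cV[int]_n) : Prop :=
  [/\ z != 0, inker A z & forall u v, ~ proper_conformal A z u v].
Definition inDp d n (A : 'M[int]_(d, n)) (z : 'cV[int]_n) : Prop :=
  [/\ z != 0, inker A z & forall u v, ~ pos_distance A z u v].
Definition inDm d n (A : 'M[int]_(d, n)) (z : 'cV[int]_n) : Prop :=
  [/\ z != 0, inker A z & forall u v, ~ neg_distance A z u v].
Definition inD d n (A : 'M[int]_(d, n)) (z : 'cV[int]_n) : Prop :=
  inDp A z /\ inDm A z.
Definition inDw d n (A : 'M[int]_(d, n)) (z : 'cV[int]_n) : Prop :=
  inDp A z \/ inDm A z.

(* A positive distance decomposition z = u + v has u^+ <= z^+, so u_i > 0
   forces z_i >= u_i, i.e. v_i >= 0: it is semi-conformal.  Symmetrically, a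
   negative distance decomposition z = u + v makes z = v + u semi-conformal.
   Conversely, a conformal decomposition has u^+ <= z^+, u^- <= z^- and
   ||z|| = ||u|| + ||v|| > ||v||, so it is a distance decomposition of both
   signs. *)
From mathcomp Require Import all_boot all_order all_algebra.
From mathcomp Require Import zify.

Set Implicit Arguments.
Unset Strict Implicit.
Unset Printing Implicit Defensive.
Import Order.TTheory GRing.Theory Num.Theory.
Local Open Scope ring_scope.

Lemma max0D_ge0 (x y : int) :
  0 < x -> Num.max x 0 <= Num.max (x + y) 0 -> 0 <= y.
Proof. lia. Qed.

Lemma max0ND_ge0 (x y : int) :
  0 < y -> Num.max (- x) 0 <= Num.max (- (x + y)) 0 -> 0 <= x.
Proof. lia. Qed.

Section PosNegParts.

Variable n : nat.
Implicit Types z u v : 'cV[int]_n.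

Lemma vle_addr u v : vle 0 v -> vle u (u + v).
Proof. by move=> v_ge0 i; have := v_ge0 i; rewrite !mxE lerDl. Qed.

Lemma vpos_ge0 z : vle 0 (vpos z).
Proof. by move=> i; rewrite !mxE; lia. Qed.

Lemma vneg_ge0 z : vle 0 (vneg z).
Proof. by move=> i; rewrite !mxE; lia. Qed.

Lemma norm1_posneg z : norm1 z = \sum_i (vpos z i 0 + vneg z i 0).
Proof. by apply: eq_bigr => i _; rewrite !mxE; lia. Qed.

Lemma norm1_gt0 z : z != 0 -> 0 < norm1 z.
Proof.
move=> z_neq0; rewrite lt_def sumr_ge0 // andbT /norm1 psumr_eq0 //.
apply: contra z_neq0 => /allP z_eq0; apply/eqP/matrixP => i j.
by have := z_eq0 i (mem_index_enum i); rewrite /= normr_eq0 ord1 mxE => /eqP.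
Qed.

Lemma norm1_conformal z u v :
  vpos z = vpos u + vpos v -> vneg z = vneg u + vneg v ->
  norm1 z = norm1 u + norm1 v.
Proof.
move=> zpos zneg; rewrite !norm1_posneg -big_split /=.
by apply: eq_bigr => i _; rewrite zpos zneg !mxE addrACA.
Qed.

End PosNegParts.

Section Decompositions.

Variables (d n : nat) (A : 'M[int]_(d, n)).
Implicit Types z u v : 'cV[int]_n.

Lemma kdecompC z u v : kdecomp A z u v -> kdecomp A z v u.
Proof. by case=> Au Av u_neq0 v_neq0 ->; split=> //; rewrite addrC. Qed.

Lemma pos_distance_semiconformal z u v :
  pos_distance A z u v -> proper_semiconformal A z u v.
Proof.
case=> -[Au Av u_neq0 v_neq0 zE] [upos_le _]; split; first by split.
move=> i ui_gt0; apply: (max0D_ge0 ui_gt0).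
by have := upos_le i; rewrite zE !mxE.
Qed.

Lemma neg_distance_semiconformal z u v :
  neg_distance A z u v -> proper_semiconformal A z v u.
Proof.
case=> -[Au Av u_neq0 v_neq0 zE] [uneg_le _].
split; first exact/kdecompC.
move=> i vi_gt0; apply: (max0ND_ge0 vi_gt0).
by have := uneg_le i; rewrite zE !mxE.
Qed.

Lemma conformal_norm1_lt z u v :
  proper_conformal A z u v -> norm1 v < norm1 z.
Proof.
case=> -[_ _ u_neq0 _ _] [zpos zneg].
by rewrite (norm1_conformal zpos zneg) ltrDr norm1_gt0.
Qed.

Lemma conformal_pos_distance z u v :
  proper_conformal A z u v -> pos_distance A z u v.
Proof.
move=> zuv; have [uv [zpos _]] := zuv.
split=> //; split; last exact: conformal_norm1_lt zuv.
by rewrite zpos; apply/vle_addr/vpos_ge0.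
Qed.

Lemma conformal_neg_distance z u v :
  proper_conformal A z u v -> neg_distance A z u v.
Proof.
move=> zuv; have [uv [_ zneg]] := zuv.
split=> //; split; last exact: conformal_norm1_lt zuv.
by rewrite zneg; apply/vle_addr/vneg_ge0.
Qed.

Lemma inS_inD z : inS A z -> inD A z.
Proof.
case=> z_neq0 Az noS; split; split=> // u v.
  by move/pos_distance_semiconformal; apply: noS.
by move/neg_distance_semiconformal; apply: noS.
Qed.

Lemma inD_inDw z : inD A z -> inDw A z.
Proof. by case; left. Qed.

Lemma inDw_inG z : inDw A z -> inG A z.
Proof.
case=> -[z_neq0 Az noD]; split=> // u v.
  by move/conformal_pos_distance; apply: noD.
by move/conformal_neg_distance; apply: noD.
Qed.

End Decompositions.

Theorem proposition8p6 (d n : nat) (A : 'M[int]_(d, n)) :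
  (* ker(A) ∩ N^n = {0} *)
  (forall z : 'cV[int]_n, inker A z -> (forall i, 0 <= z i 0) -> z = 0) ->
  (forall z, inS A z -> inD A z) /\
  (forall z, inD A z -> inDw A z) /\
  (forall z, inDw A z -> inG A z).
Proof.
(* The inclusions hold for every integer matrix. *)
move=> _; split; first exact: inS_inD.
by split; [exact: inD_inDw | exact: inDw_inG].
Qed.
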